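(* Let $\Psi=\langle \mathcal{S},\mathcal{P},\mathcal{T}\rangle$ with $\mathcal{T}=\langle prov,req\rangle$ be an SPL and let $c\in\mathcal{C}$ be redundant. Define $\mathcal{T}'=\langle prov',req'\rangle$ by $prov'(f)=prov(f)\setminus\{A : c\in A\}$ and $req'(f)=req(f)\setminus\{A: c\in A\}$ for every $f\in\mathcal{F}$, and let $\Psi'=\langle \mathcal{S},\mathcal{P},\mathcal{T}'\rangle$. Then $Prod(\Psi)=Prod(\Psi')$.
   Context: An SPL $\Psi=\langle \mathcal{S},\mathcal{P},\mathcal{T}\rangle$ consists of a finite set of features $\mathcal{F}$, a finite set of components $\mathcal{C}$, a scope $\mathcal{S}\subseteq \mathcal{P}ow(\mathcal{F})$ (elements are specifications), a platform $\mathcal{P}\subseteq \mathcal{P}ow(\mathcal{C})$ (elements are architectures), and a traceability relation $\mathcal{T}=\langle prov, req\rangle$ with $prov, req:\mathcal{F}\to\mathcal{P}ow(\mathcal{P}ow(\mathcal{C}))$. For $C\subseteq\mathcal{C}$, $f\in\mathcal{F}$: $implements_\Psi(C,f)$ iff $\exists C_1\in prov(f), C_2\in req(f)$ with $C_2\subseteq C_1\subseteq C$; $Provided\_by_\Psi(C)=\{f: implements_\Psi(C,f)\}$. $\mathrm{Covers}_\Psi(C,F)$ iff $Provided\_by_\Psi(C)\in\mathcal{S}$ and $F\subseteq Provided\_by_\Psi(C)$. The set of products is $Prod(\Psi)=\{\langle F,C\rangle : F\in\mathcal{S}, C\in\mathcal{P}, \mathrm{Covers}_\Psi(C,F)\}$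 (for $\Psi'$ all these notions are computed with $\mathcal{T}'$). A component $c\in\mathcal{C}$ is redundant (in $\Psi$) if for every $C\in\mathcal{P}$ with $c\in C$ there exists $C'\in\mathcal{P}$ with $c\notin C'$, $C'\subseteq C$ and $Provided\_by_\Psi(C)=Provided\_by_\Psi(C')$. *)

From mathcomp Require Import all_boot.
Set Implicit Arguments. Unset Strict Implicit. Unset Printing Implicit Defensive.

Record trace (F C : finType) := Trace {
  prov : F -> {set {set C}};
  req  : F -> {set {set C}} }.

Record SPL (F C : finType) := MkSPL {
  scope : {set {set F}};
  platform : {set {set C}};
  tr : trace F C }.

Definition implements (F C : finType) (Ps : SPL F C) (A : {set C}) (f : F) : bool :=
  [exists C1 in prov (tr Ps) f, exists C2 in req (tr Ps) f,
     (C2 \subset C1) && (C1 \subset A)].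

Definition Provided_by (F C : finType) (Ps : SPL F C) (A : {set C}) : {set F} :=
  [set f | implements Ps A f].

Definition Covers (F C : finType) (Ps : SPL F C) (A : {set C}) (Fs : {set F}) : bool :=
  (Provided_by Ps A \in scope Ps) && (Fs \subset Provided_by Ps A).

Definition Prod (F C : finType) (Ps : SPL F C) : {set {set F} * {set C}} :=
  [set p | [&& p.1 \in scope Ps, p.2 \in platform Ps & Covers Ps p.2 p.1]].

Definition redundant (F C : finType) (Ps : SPL F C) (c : C) : Prop :=
  forall A, A \in platform Ps -> c \in A ->
    exists A', [/\ A' \in platform Ps, c \notin A', A' \subset A &
                   Provided_by Ps A = Provided_by Ps A'].

Definition remove_comp (F C : finType) (T : trace F C) (c : C) : trace F C :=
  Trace (fun f => [set A in prov T f | c \notin A])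
        (fun f => [set A in req T f | c \notin A]).

Definition SPL_remove (F C : finType) (Ps : SPL F C) (c : C) : SPL F C :=
  MkSPL (scope Ps) (platform Ps) (remove_comp (tr Ps) c).

(* Write Psi' = SPL_remove Psi c.  Only the traceability relation changes,
   so scope and platform are shared, and the products of Psi and Psi' agree
   as soon as Provided_by agrees on every architecture of the platform.
   - Psi' has fewer candidate pairs (C1, C2), so it implements less
     ([implements_removed]); implementation is monotone in the
     architecture ([implements_mono]).
   - On an architecture avoiding c, every witness pair avoids c as well, so
     Psi and Psi' implement the same features ([implements_avoiding]).
   - For an architecture A of the platform containing c, redundancy gives
     A' included in A, avoiding c, with the same provided features; a
     feature of A is then implemented by Psi' on A' and hence on A
     ([Provided_by_removed]). *)
From mathcomp Require Import all_boot.
Set Implicit Arguments. Unset Strict Implicit.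

Lemma implements_mono (F C : finType) (Ps : SPL F C) (A B : {set C}) (f : F) :
  A \subset B -> implements Ps A f -> implements Ps B f.
Proof.
move=> sAB /exists_inP[C1 provC1 /exists_inP[C2 reqC2 /andP[sC21 sC1A]]].
apply/exists_inP; exists C1 => //; apply/exists_inP; exists C2 => //.
by rewrite sC21 (subset_trans sC1A sAB).
Qed.

Section Implementation.

Variables (F C : finType) (Ps : SPL F C).

(* Removing a component only deletes witness pairs. *)
Lemma implements_removed (c : C) (A : {set C}) (f : F) :
  implements (SPL_remove Ps c) A f -> implements Ps A f.
Proof.
case/exists_inP=> C1; rewrite inE => /andP[provC1 _] /exists_inP[C2].
rewrite inE => /andP[reqC2 _] sub; apply/exists_inP; exists C1 => //.
by apply/exists_inP; exists C2.
Qed.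

(* On an architecture avoiding c, every witness pair avoids c. *)
Lemma implements_avoiding (c : C) (A : {set C}) (f : F) :
  c \notin A -> implements Ps A f = implements (SPL_remove Ps c) A f.
Proof.
move=> cNA; apply/idP/idP; last exact: implements_removed.
case/exists_inP=> C1 provC1 /exists_inP[C2 reqC2 /andP[sC21 sC1A]].
have cNC1 : c \notin C1 by apply: contra cNA; apply: subsetP.
have cNC2 : c \notin C2 by apply: contra cNC1; apply: subsetP.
apply/exists_inP; exists C1; first by rewrite inE provC1.
by apply/exists_inP; exists C2; rewrite ?inE ?reqC2 ?sC21.
Qed.

Lemma Provided_by_removed (c : C) (A : {set C}) :
  redundant Ps c -> A \in platform Ps ->
  Provided_by Ps A = Provided_by (SPL_remove Ps c) A.
Proof.
move=> redc AP; apply/setP => f; rewrite !inE.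
have [cA|cNA] := boolP (c \in A); last exact: implements_avoiding.
apply/idP/idP; last exact: implements_removed.
have [A' [_ cNA' sA'A sameA]] := redc A AP cA.
move=> implA; have : f \in Provided_by Ps A' by rewrite -sameA inE.
rewrite inE (implements_avoiding _ cNA').
exact: implements_mono.
Qed.

End Implementation.

Theorem mainTheorem4 (F C : finType) (Ps : SPL F C) (c : C) :
  redundant Ps c -> Prod Ps = Prod (SPL_remove Ps c).
Proof.
move=> redc; apply/setP => -[Fs A]; rewrite !inE /=.
have [AP|ANP] := boolP (A \in platform Ps); last by rewrite !andbF.
by rewrite /Covers /= (Provided_by_removed redc AP).
Qed.
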